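(* Let $G$ be a tree and let $v\in V(G)$ be a vertex with $N_G(v)=\{v_1,\dots,v_r\}$, where $r\geq 2$ and $\deg_G(v_i)=1$ for all $i<r$. Let $e=\{v,v_r\}$. Then $$\nu_3(G\setminus N_G[e])\leq \nu_3(G)-1.$$
   Context: All graphs are finite and simple; a tree is a graph containing no cycle. $N_G(z)$ is the set of neighbors of $z$; for an edge $e=\{x,y\}$, $N_G[e]=N_G(x)\cup N_G(y)\cup\{x,y\}$, and $G\setminus N_G[e]$ is the induced subgraph of $G$ on $V(G)\setminus N_G[e]$. A $3$-path in $G$ is a sequence of three distinct vertices $a,b,c$ with $\{a,b\},\{b,c\}\in E(G)$. A $3$-path induced matching of $G$ is a collection of pairwise vertex-disjoint $3$-paths whose union is an induced subgraph of $G$ (the induced subgraph on the union of their vertices has no edges other than the path edges). $\nu_3(G)$ is the largest number of paths in a $3$-path induced matching of $G$. *)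

From mathcomp Require Import all_boot.
Set Implicit Arguments. Unset Strict Implicit. Unset Printing Implicit Defensive.

Section Graphs.
Variable T : finType.

Definition simple_graph (g : rel T) := symmetric g /\ irreflexive g.

Definition nbhd (g : rel T) (z : T) : {set T} := [set w | g z w].
Definition deg (g : rel T) (z : T) : nat := #|nbhd g z|.

Definition nbhd_edge (g : rel T) (x y : T) : {set T} :=
  nbhd g x :|: nbhd g y :|: [set x; y].

Definition has_cycle (g : rel T) :=
  exists p : seq T, [/\ 3 <= size p, uniq p & cycle g p].

Definition is_tree (g : rel T) :=
  [/\ simple_graph g, (forall x y, connect g x y) & ~ has_cycle g].

Definition path3 (g : rel T) (p : T * T * T) :=
  let: (a, b, c) := p in
  [&& a != b, b != c, a != c, g a b & g b c].

Definition pverts (p : T * T * T) : {set T} :=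
  let: (a, b, c) := p in [set a; b; c].

Definition pedge (p : T * T * T) (x y : T) :=
  let: (a, b, c) := p in
  [|| (x == a) && (y == b), (x == b) && (y == a),
      (x == b) && (y == c) | (x == c) && (y == b)].

(* P is a 3-path induced matching of the induced subgraph G[S]:
   every member is a 3-path inside S, distinct members are vertex-disjoint,
   and every edge of G between covered vertices is an edge of some path of P
   (i.e. the union of the paths is an induced subgraph). *)
Definition covered (P : {set T * T * T}) : {set T} := \bigcup_(p in P) pverts p.

Definition induced_3matching (g : rel T) (S : {set T}) (P : {set T * T * T}) :=
  [&& [forall p in P, path3 g p && (pverts p \subset S)],
      [forall p in P, forall q in P, (p != q) ==> [disjoint pverts p & pverts q]]
    & [forall x in covered P, forall y in covered P,
         g x y ==> [exists p in P, pedge p x y]]].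

Definition nu3 (g : rel T) (S : {set T}) : nat :=
  \max_(P : {set T * T * T} | induced_3matching g S P) #|P|.

End Graphs.

(* The leaf v_1, the centre v and v_r form an induced 3-path whose closed
   neighbourhood lies inside N_G[e].  Hence it can be added to any 3-path
   induced matching of G \ N_G[e] without creating new vertex overlaps or
   edges between paths. *)
From mathcomp Require Import all_boot.

Set Implicit Arguments.
Unset Strict Implicit.
Unset Printing Implicit Defensive.

Section InducedMatchings.
Variables (T : finType) (g : rel T).
Implicit Types (A S : {set T}) (P : {set T * T * T}) (a b c x y : T).

Definition closed_nbhd (A : {set T}) : {set T} :=
  A :|: \bigcup_(x in A) nbhd g x.

Lemma closed_nbhd_sep A x y :
  x \in A -> y \notin closed_nbhd A -> (x != y) && ~~ g x y.
Proof.
move=> xA; rewrite !inE negb_or => /andP[yA /bigcupP yN].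
apply/andP; split; first by apply: contraNneq yA => <-.
by apply/negP => gxy; apply: yN; exists x; rewrite ?inE.
Qed.

Lemma induced_3matching0 S : induced_3matching g S set0.
Proof.
apply/and3P; split; last by apply/forall_inP => x /bigcupP[p]; rewrite inE.
  by apply/forall_inP => p; rewrite inE.
by apply/forall_inP => p; rewrite inE.
Qed.

Lemma covered_subset S P : induced_3matching g S P -> covered P \subset S.
Proof.
case/and3P => /forall_inP PS _ _; apply/subsetP => x /bigcupP[p pP xp].
by case/andP: (PS p pP) => _ /subsetP; apply.
Qed.

Lemma coveredU1 p P : covered (p |: P) = pverts p :|: covered P.
Proof. by rewrite /covered bigcup_setU big_set1. Qed.

Lemma induced_3matchingS S S' P :
  S \subset S' -> induced_3matching g S P -> induced_3matching g S' P.
Proof.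
move=> sSS' /and3P[/forall_inP PS disjP edgeP]; apply/and3P; split=> //.
apply/forall_inP => p pP; case/andP: (PS p pP) => -> pS /=.
exact: subset_trans sSS'.
Qed.

Lemma leq_card_nu3 S P : induced_3matching g S P -> #|P| <= nu3 g S.
Proof. exact: leq_bigmax_cond. Qed.

Lemma nu3_witness S : exists2 P, induced_3matching g S P & nu3 g S = #|P|.
Proof.
have : 0 < #|[pred P | induced_3matching g S P]|.
  by apply/card_gt0P; exists set0; rewrite inE induced_3matching0.
by case/(eq_bigmax_cond (fun P : {set T * T * T} => #|P|)) => P; exists P.
Qed.

Lemma nu3S S S' : S \subset S' -> nu3 g S <= nu3 g S'.
Proof.
move=> sSS'; have [P PS ->] := nu3_witness S.
exact/leq_card_nu3/(induced_3matchingS sSS').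
Qed.

Lemma deg1_adj_eq u v y : deg g u = 1 -> g u v -> g u y -> y = v.
Proof.
move/eqP/cards1P=> [z Nu] guv guy.
have : v \in nbhd g u by rewrite inE.
have : y \in nbhd g u by rewrite inE.
by rewrite Nu !inE => /eqP-> /eqP->.
Qed.

Lemma deg_gt1_nbhd_neq v w : 1 < deg g v -> exists2 u, g v u & u != w.
Proof.
case/card_gt1P=> a [b [+ + ab]]; rewrite !inE => gva gvb.
by have [aw | ] := eqVneq a w; [exists b; rewrite // -aw eq_sym | exists a].
Qed.

Hypotheses (gsym : symmetric g) (girr : irreflexive g).

Lemma edge_neq x y : g x y -> x != y.
Proof. by apply: contraTneq => ->; rewrite girr. Qed.

Lemma pedge_induced_path3 a b c x y :
  ~~ g a c ->
  x \in [set a; b; c] -> y \in [set a; b; c] -> g x y -> pedge (a, b, c) x y.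
Proof.
move=> nac; rewrite !inE /pedge.
case/orP=> [/orP[]|] /eqP-> /orP[/orP[]|] /eqP->; rewrite ?eqxx ?orbT ?girr //.
all: by rewrite ?[g c a]gsym => /(negP nac).
Qed.

Lemma induced_3matchingU1 S P a b c :
  path3 g (a, b, c) -> ~~ g a c -> [set a; b; c] \subset S ->
  induced_3matching g (S :\: closed_nbhd [set a; b; c]) P ->
  induced_3matching g S ((a, b, c) |: P).
Proof.
set p := (a, b, c); set C := closed_nbhd _ => p3 nac pS PSC.
have covered_notC y : y \in covered P -> y \notin C.
  by move/(subsetP (covered_subset PSC)); rewrite inE => /andP[].
have sep x y : x \in pverts p -> y \in covered P -> (x != y) && ~~ g x y.
  by move=> xp /covered_notC; apply: closed_nbhd_sep.
have pverts_covered q : q \in P -> pverts q \subset covered P.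
  by move=> qP; apply: (bigcup_sup q).
case/and3P: PSC => /forall_inP PS /forall_inP disjP /forall_inP edgeP.
apply/and3P; split.
- apply/forall_inP => q /setU1P[-> | qP]; first by rewrite p3.
  by case/andP: (PS q qP) => -> /subset_trans; apply; rewrite subsetDl.
- have disj_p q : q \in P -> [disjoint pverts p & pverts q].
    move=> qP; rewrite disjoints_subset; apply/subsetP => x xp.
    rewrite inE; apply/negP => /(subsetP (pverts_covered q qP)) /(sep x x xp).
    by rewrite eqxx.
  apply/forall_inP => q /setU1P[-> | qP];
    apply/forall_inP => r /setU1P[-> | rP]; apply/implyP => qr.
  + by rewrite eqxx in qr.
  + exact: disj_p.
  + by rewrite disjoint_sym disj_p.
  + exact: (implyP (forall_inP (disjP q qP) r rP)).
rewrite coveredU1; apply/forall_inP => x /setUP[xp | xP];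
  apply/forall_inP => y /setUP[yp | yP]; apply/implyP => gxy.
- apply/exists_inP; exists p; first exact: setU11.
  exact: pedge_induced_path3.
- by case/andP: (sep x y xp yP) => _ /negP.
- by rewrite gsym in gxy; case/andP: (sep y x yp xP) => _ /negP.
- case/exists_inP: (implyP (forall_inP (edgeP x xP) y yP) gxy) => r rP xyr.
  by apply/exists_inP; exists r; rewrite ?setU1r.
Qed.

Lemma nu3_add_induced_path3 S a b c :
  path3 g (a, b, c) -> ~~ g a c -> [set a; b; c] \subset S ->
  nu3 g (S :\: closed_nbhd [set a; b; c]) + 1 <= nu3 g S.
Proof.
move=> p3 nac pS; have [P PSC ->] := nu3_witness (S :\: closed_nbhd [set a; b; c]).
have pP : (a, b, c) \notin P.
  apply/negP=> pP; case/and3P: PSC => /forall_inP/(_ _ pP)/andP[_ /subsetP].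
  by move/(_ a); rewrite !inE eqxx /= => /(_ isT).
apply: leq_trans (leq_card_nu3 (induced_3matchingU1 p3 nac pS PSC)).
by rewrite cardsU1 pP addnC.
Qed.

End InducedMatchings.

Theorem lemma4p3 (T : finType) (g : rel T) (v vr : T) :
  is_tree g ->
  g v vr ->
  2 <= deg g v ->
  (forall u, g v u -> u != vr -> deg g u = 1) ->
  nu3 g (~: nbhd_edge g v vr) + 1 <= nu3 g [set: T].
Proof.
move=> [[gsym girr] _ _] gvvr degv leaf.
have [u gvu uvr] := deg_gt1_nbhd_neq vr degv.
have u_leaf y : g u y -> y = v by apply: deg1_adj_eq (leaf u gvu uvr) _; rewrite gsym.
have uv : u != v by rewrite eq_sym (edge_neq girr gvu).
have p3 : path3 g (u, v, vr).
  by rewrite /path3 uv uvr (edge_neq girr gvvr) [g u v]gsym gvu gvvr.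
have n_u_vr : ~~ g u vr by apply/negP=> /u_leaf vrv; rewrite vrv girr in gvvr.
have closed_nbhd_sub : closed_nbhd g [set u; v; vr] \subset nbhd_edge g v vr.
  apply/subsetP=> x; rewrite /nbhd_edge !inE.
  case/orP=> [/orP[/orP[]|] /eqP-> | /bigcupP[y]]; rewrite ?gvu ?eqxx ?orbT //.
  by rewrite !inE => /orP[/orP[]|] /eqP-> => [/u_leaf ->|->|->]; rewrite ?eqxx ?orbT.
apply: leq_trans (nu3_add_induced_path3 gsym girr p3 n_u_vr (subsetT _)).
by rewrite leq_add2r setTD nu3S // setCS.
Qed.
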